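(* Let $T$ be a chain with entries in $\{1,2\}$, not consisting only of $1$'s and not consisting only of $2$'s, such that the maximal initial block of consecutive $2$'s of $T$ and the maximal final block of consecutive $2$'s of $T$ each have even length (possibly zero), and suppose $\mathcal{Z}(T)>\tfrac13$. Write $T=[1^{e^1_1}2^{e^2_1}1^{e^1_2}2^{e^2_2}\cdots1^{e^1_n}2^{e^2_n}]$, where all $e^j_i$ are positive integers except that $e^1_1$ and $e^2_n$ may be $0$. Then there is $j\in\{1,2\}$ such that $e^j_i\le 2$ for all $i\in\{1,\dots,n\}$.
   Context: A chain is a finite sequence $T=[a_1a_2\dots a_n]$ of positive integers; $c^e$ denotes $e$ consecutive copies of the entry $c$. For a chain $S=[s_1\dots s_m]$, $[0;s_1,\dots,s_m]$ and $[s_1;s_2,\dots,s_m]$ denote finite continued fractions. Define $\mathcal{Z}(T)=\big(\max_{1\le i\le n}([a_i;a_{i+1},\dots,a_n]+[0;a_{i-1},\dots,a_1])\big)^{-1}$, where for $i=1$ the second summand is $0$. *)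

From mathcomp Require Import all_boot all_order all_algebra.
Set Implicit Arguments. Unset Strict Implicit. Unset Printing Implicit Defensive.
Import Order.TTheory GRing.Theory Num.Theory.
Local Open Scope ring_scope.

(* A chain is a finite sequence of positive integers (seq nat). *)

Fixpoint cf (a : nat) (s : seq nat) : rat :=
  match s with
  | [::] => a%:R
  | b :: s' => a%:R + (cf b s')^-1
  end.

(* [0; s_1, ..., s_k], with value 0 for the empty sequence. *)
Definition cf0 (s : seq nat) : rat :=
  match s with
  | [::] => 0
  | b :: s' => (cf b s')^-1
  end.

(* For 0-indexed position i (paper's index i+1):
   [a_{i+1}; a_{i+2},...,a_n] + [0; a_i, ..., a_1]. *)
Definition Zterm (T : seq nat) (i : nat) : rat :=
  cf (nth 0%N T i) (drop i.+1 T) + cf0 (rev (take i T)).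

(* Z(T) = (max_i Zterm T i)^{-1}; all terms are positive, so folding
   max from 0 computes the maximum for nonempty T. *)
Definition Zc (T : seq nat) : rat :=
  (foldr Num.max 0 [seq Zterm T i | i <- iota 0 (size T)])^-1.

Definition init2 (T : seq nat) : nat := find (fun a => a != 2%N) T.
Definition final2 (T : seq nat) : nat := find (fun a => a != 2%N) (rev T).

Definition blocks (e1 e2 : seq nat) : seq nat :=
  flatten [seq nseq p.1 1%N ++ nseq p.2 2%N | p <- zip e1 e2].

(* Z(T) > 1/3 means that at every position [a_i; a_{i+1}, ...] + [0; a_{i-1}, ..., a_1] < 3.
   At an entry 2 this pins down the neighbouring continued fractions so tightly that the
   factors 121 and 2212 and the suffix 21 cannot occur.  If both a block 1^{>=3} and a block
   2^{>=3} occurred, then, reversing T if necessary, T would contain a factor 111 w 222; take w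
   shortest.  The excluded factors force w = (2211)^k, and the inequality at the first 2 of
   222, rewritten with 1 - [0; 2, 2, S] = [0; 1, 1, 2, S], can then only hold if 222 is
   followed by 2 (1122)^j 111 with j < k.  Read backwards, this is a shorter factor
   111 (2211)^j 222 of the reversed chain, which is admissible as well. *)

From mathcomp Require Import all_boot all_order all_algebra.
From mathcomp Require Import ring lra zify.
Set Implicit Arguments. Unset Strict Implicit. Unset Printing Implicit Defensive.
Import Order.TTheory GRing.Theory Num.Theory.
Local Open Scope ring_scope.

Local Notation all12 := (all (fun a : nat => (a == 1%N) || (a == 2%N))).

Lemma cf_cf0 b s : cf b s = b%:R + cf0 s.
Proof. by case: s => [|c s] /=; rewrite ?addr0. Qed.

Lemma cf0_cons b s : cf0 (b :: s) = (b%:R + cf0 s)^-1.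
Proof. by rewrite /= cf_cf0. Qed.

Lemma cf0_ge0 s : 0 <= cf0 s.
Proof. by elim: s => [|b s IH] //; rewrite cf0_cons invr_ge0 addr_ge0. Qed.

Lemma cf0_cons_le b s : (0 < b)%N -> cf0 (b :: s) <= b%:R^-1.
Proof.
move=> b_gt0; rewrite cf0_cons lef_pV2 ?posrE ?ltr0n ?lerDl ?cf0_ge0 //.
by rewrite ltr_wpDr ?cf0_ge0 ?ltr0n.
Qed.

Lemma cf0_cons_ge b s c : (0 < b)%N -> cf0 s <= c -> (b%:R + c)^-1 <= cf0 (b :: s).
Proof.
move=> b_gt0 sc; have b_pos : 0 < b%:R :> rat by rewrite ltr0n.
rewrite cf0_cons lef_pV2 ?lerD2l // posrE; last by rewrite ltr_wpDr ?cf0_ge0.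
by rewrite ltr_wpDr // (le_trans (cf0_ge0 s)).
Qed.

Lemma cf0_le1 s : all12 s -> cf0 s <= 1.
Proof.
case: s => [|b s] // /andP[b12 _].
have b_gt0 : (0 < b)%N by case/orP: b12 => /eqP->.
apply: le_trans (cf0_cons_le s b_gt0) _.
by rewrite invf_le1 ?ler1n ?ltr0n.
Qed.

Lemma cf0_cons_lt a s t : (0 < a)%N -> (cf0 (a :: s) < cf0 (a :: t)) = (cf0 t < cf0 s).
Proof.
move=> a_gt0; have a_pos : 0 < a%:R :> rat by rewrite ltr0n.
by rewrite !cf0_cons ltf_pV2 ?ltrD2l // posrE ltr_wpDr ?cf0_ge0.
Qed.

Lemma cf0_compl b s : 1 - cf0 (b.+2 :: s) = cf0 (1 :: b.+1 :: s).
Proof.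
rewrite !cf0_cons; have := cf0_ge0 s; move: (cf0 s) => x x_ge0.
have b_ge0 : 0 <= b%:R :> rat by [].
rewrite -[b.+2]addn2 -[b.+1]addn1 !natrD; field.
by apply/andP; split; rewrite gt_eqF //; lra.
Qed.

Lemma cf0_cons2_le_cons1 s t : cf0 s <= 1 -> cf0 (2 :: t) <= cf0 (1 :: s).
Proof.
move=> s_le1; apply: le_trans (@cf0_cons_le 2 t isT) _.
exact: le_trans (@cf0_cons_ge 1 s 1 isT s_le1).
Qed.

Lemma Zterm_cat X c Y : Zterm (X ++ c :: Y) (size X) = c%:R + cf0 Y + cf0 (rev X).
Proof.
rewrite /Zterm nth_cat ltnn subnn /= cf_cf0 drop_cat ltnNge leqnSn /= subSnn /=.
by rewrite take_cat ltnn subnn take0 cats0 drop0.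
Qed.

Definition admissible (T : seq nat) :=
  [/\ all12 T, forall i, (i < size T)%N -> Zterm T i < 3,
      ~~ odd (init2 T) & ~~ odd (final2 T)].

Lemma admissible_rev T : admissible T -> admissible (rev T).
Proof.
case=> T12 TZ even_init even_final; split; rewrite ?all_rev //.
- move=> i; rewrite size_rev => lt_iT.
  have lt_jT : (size T - i.+1 < size T)%N by rewrite subnSK // leq_subr.
  have := TZ _ lt_jT; rewrite /Zterm nth_rev // drop_rev take_rev revK !cf_cf0.
  by rewrite subnSK // addrAC.
- by rewrite /final2 (@revK _ T).
Qed.

Lemma final2_cat1 X t : final2 (X ++ 1%N :: nseq t 2%N) = t.
Proof.
by rewrite /final2 rev_cat rev_cons rev_nseq -cats1 -catA find_cat has_nseq andbF size_nseq addn0.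
Qed.

Fixpoint rep {A : Type} (k : nat) (x : seq A) : seq A :=
  if k is k'.+1 then x ++ rep k' x else [::].

Lemma rep_rcons {A : Type} k (x : seq A) : rep k.+1 x = rep k x ++ x.
Proof.
elim: k => [|k IH]; first by rewrite /= cats0.
by rewrite -[rep k.+2 x]/(x ++ rep k.+1 x) {1}IH catA.
Qed.

Lemma rev_rep {A : Type} k (x : seq A) : rev (rep k x) = rep k (rev x).
Proof. by elim: k => [|k IH] //=; rewrite rev_cat IH -rep_rcons. Qed.

Lemma size_rep {A : Type} k (x : seq A) : size (rep k x) = (k * size x)%N.
Proof. by elim: k => [|k IH] //=; rewrite size_cat IH mulSn. Qed.

Lemma rep_cat_shift {A : Type} k (x y : seq A) : x ++ rep k (y ++ x) = rep k (x ++ y) ++ x.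
Proof. by elim: k => [|k IH] /=; rewrite ?cats0 // -!catA IH. Qed.

Section Admissible.

Variable T : seq nat.
Hypothesis T_adm : admissible T.

Lemma admissible_Zterm X c Y : T = X ++ c :: Y -> c%:R + cf0 Y + cf0 (rev X) < 3.
Proof.
case: T_adm => _ TZ _ _ eT; rewrite -Zterm_cat -eT; apply: TZ.
by rewrite eT size_cat /= addnS ltnS leq_addr.
Qed.

Lemma all12_suffix X S : T = X ++ S -> all12 S.
Proof. by case: T_adm => T12 _ _ _ eT; move: T12; rewrite eT all_cat => /andP[]. Qed.

Lemma cf0_suffix_le1 X S : T = X ++ S -> cf0 S <= 1.
Proof. by move/all12_suffix; apply: cf0_le1. Qed.

Lemma cf0_rev_prefix_le1 X S : T = X ++ S -> cf0 (rev X) <= 1.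
Proof.
case: T_adm => T12 _ _ _ eT; apply: cf0_le1.
by move: T12; rewrite eT all_cat all_rev => /andP[].
Qed.

Lemma no_suffix21 : ~~ suffix [:: 2; 1]%N T.
Proof.
apply/suffixP => -[X eT]; have := admissible_Zterm eT.
by rewrite cf0_cons addr0 invr1; have := cf0_ge0 (rev X); lra.
Qed.

Lemma no_infix2212 : ~~ infix [:: 2; 2; 1; 2]%N T.
Proof.
apply/infixP => -[X [W eT]].
have /admissible_Zterm : T = (X ++ [:: 2%N]) ++ 2%N :: 1%N :: 2%N :: W by rewrite eT -catA.
rewrite cats1 rev_rcons.
have : 3^-1 <= cf0 (2%N :: rev X) := @cf0_cons_ge 2 _ 1 isT (cf0_rev_prefix_le1 eT).
have : 2/3 <= cf0 [:: 1, 2 & W]%N := @cf0_cons_ge 1 _ 2^-1 isT (@cf0_cons_le 2 W isT).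
lra.
Qed.

Lemma no_infix121 : ~~ infix [:: 1; 2; 1]%N T.
Proof.
apply/infixP => -[X [W eT]].
have eT' : T = (X ++ [:: 1%N]) ++ 2%N :: 1%N :: W by rewrite eT -catA.
have := admissible_Zterm eT'; rewrite cats1 rev_rcons.
have : 2^-1 <= cf0 (1%N :: rev X) := @cf0_cons_ge 1 _ 1 isT (cf0_rev_prefix_le1 eT).
have eTW : T = (X ++ [:: 1; 2; 1]%N) ++ W by rewrite eT catA.
have : 2^-1 <= cf0 (1%N :: W) := @cf0_cons_ge 1 _ 1 isT (cf0_suffix_le1 eTW).
lra.
Qed.

Lemma cf0_lt_after22 Q V y : T = Q ++ [:: 2; 2]%N ++ V -> cf0 [:: 1, 1 & y]%N < cf0 V ->
  exists2 V', V = [:: 1, 1 & V']%N & cf0 y < cf0 V'.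
Proof.
move=> eT; have := all12_suffix (etrans eT (catA _ _ _)).
case: V eT => [|a V] eT; first by rewrite ltNge cf0_ge0.
case/andP => /orP[]/eqP ea V12; subst a; last first.
  by rewrite ltNge cf0_cons2_le_cons1 // (@cf0_cons_le 1 y isT) ?invr1.
case: V eT V12 => [|b V] eT.
  by case/negP: no_suffix21; apply/suffixP; exists (Q ++ [:: 2%N]); rewrite eT -catA.
case/andP => /orP[]/eqP eb _; subst b.
  by rewrite !cf0_cons_lt // => lt_yV; exists V.
by case/negP: no_infix2212; apply/infixP; exists Q, V; rewrite eT.
Qed.

Lemma cf0_lt_after2 X S y : T = X ++ 2%N :: S -> odd (final2 (X ++ [:: 2%N])) ->
  cf0 [:: 2, 2 & y]%N < cf0 (2%N :: S) -> exists2 S', S = 2%N :: S' & cf0 y < cf0 S'.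
Proof.
move=> eT odd_final; rewrite cf0_cons_lt //.
case: S eT => [|a S] eT.
  by case: T_adm => _ _ _; rewrite eT odd_final.
have : all12 (a :: S) by apply: (all12_suffix (X := rcons X 2%N)); rewrite cat_rcons.
case/andP => /orP[]/eqP ea /cf0_le1 S_le1; subst a.
  by rewrite ltNge cf0_cons2_le_cons1.
by rewrite cf0_cons_lt // => lt_yS; exists S.
Qed.

Lemma cf0_lt_periodic m X S u : T = X ++ 2%N :: S -> odd (final2 (X ++ [:: 2%N])) ->
  cf0 u <= 1 -> cf0 (rep m [:: 2; 2; 1; 1]%N ++ 1%N :: u) < cf0 (2%N :: S) ->
  exists j W, (j < m)%N /\ S = 2%N :: rep j [:: 1; 1; 2; 2]%N ++ [:: 1; 1; 1]%N ++ W.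
Proof.
elim: m X S => [|m IH] X S eT odd_final u_le1.
  by rewrite ltNge cf0_cons2_le_cons1.
move=> lt_u.
have [S' eS lt_S'] :=
  @cf0_lt_after2 X S ([:: 1; 1]%N ++ rep m [:: 2; 2; 1; 1]%N ++ 1%N :: u) eT odd_final lt_u.
have eT2 : T = X ++ [:: 2; 2]%N ++ S' by rewrite eT eS.
have [V eS' lt_V] := cf0_lt_after22 eT2 lt_S'.
have eT3 : T = (X ++ [:: 2; 2; 1; 1]%N) ++ V by rewrite eT2 eS' -catA.
have := all12_suffix eT3.
case: V eS' lt_V eT3 => [|a V] eS' lt_V eT3; first by rewrite ltNge cf0_ge0 in lt_V.
case/andP => /orP[]/eqP ea _; subst a.
  by exists 0%N, V; split => //; rewrite eS eS'.
have odd_final4 : odd (final2 ((X ++ [:: 2; 2; 1; 1]%N) ++ [:: 2%N])).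
  by rewrite (_ : _ ++ _ = (X ++ [:: 2; 2; 1]%N) ++ 1%N :: nseq 1 2%N) ?final2_cat1 -?catA.
have [j [W [lt_jm eV]]] := IH _ _ eT3 odd_final4 u_le1 lt_V.
by exists j.+1, W; rewrite eS eS' eV.
Qed.

Lemma periodic_gap_flip k P S :
  T = P ++ [:: 1; 1; 1]%N ++ rep k [:: 2; 2; 1; 1]%N ++ [:: 2; 2; 2]%N ++ S ->
  exists2 j, (j < k)%N & infix ([:: 2; 2; 2]%N ++ rep j [:: 1; 1; 2; 2]%N ++ [:: 1; 1; 1]%N) T.
Proof.
move=> eT; set X := P ++ [:: 1; 1; 1]%N ++ rep k [:: 2; 2; 1; 1]%N.
have /= e11 := rep_cat_shift k [:: 1; 1]%N [:: 2; 2]%N.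
have eX : X = P ++ 1%N :: rep k [:: 1; 1; 2; 2]%N ++ [:: 1; 1]%N by rewrite /X /= e11.
have eT1 : T = X ++ [:: 2, 2, 2 & S]%N by rewrite eT /X -!catA.
have eT2 : T = (X ++ [:: 2; 2]%N) ++ 2%N :: S by rewrite eT1 -catA.
have revX : rev X = (rep k [:: 1; 1; 2; 2]%N ++ [:: 1; 1]%N) ++ 1%N :: rev P.
  by rewrite /X !rev_cat rev_rep -!catA.
have lt_revX : cf0 (rep k [:: 2; 2; 1; 1]%N ++ 1%N :: rev P) < cf0 (2%N :: S).
  have := admissible_Zterm eT1; rewrite revX -e11.
  rewrite -(@cf0_cons_lt 1) // -(@cf0_cons_lt 1) // -(cf0_compl 0 (2%N :: S)); lra.
have odd_final : odd (final2 ((X ++ [:: 2; 2]%N) ++ [:: 2%N])).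
  rewrite (_ : (X ++ _) ++ _ = (P ++ 1%N :: rep k [:: 1; 1; 2; 2]%N ++ [:: 1%N]) ++ 1%N :: nseq 3 2%N).
    by rewrite final2_cat1.
  by rewrite eX -!catA /= -!catA.
have [j [W [lt_jk eS]]] := cf0_lt_periodic eT2 odd_final (cf0_rev_prefix_le1 eT) lt_revX.
exists j => //; apply/infixP; exists (X ++ [:: 2%N]), W.
by rewrite eT1 eS -!catA /= -!catA.
Qed.

Lemma gap_step j r P S :
  T = P ++ [:: 1; 1; 1]%N ++ rep j [:: 2; 2; 1; 1]%N ++ r ++ [:: 2; 2; 2]%N ++ S ->
  r != [::] -> ~~ prefix [:: 2; 2; 1; 1]%N r ->
  exists2 w, (size w < size (rep j [:: 2; 2; 1; 1]%N ++ r))%N &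
             infix ([:: 1; 1; 1]%N ++ w ++ [:: 2; 2; 2]%N) T.
Proof.
set R := rep j [:: 2; 2; 1; 1]%N => eT r_nil no_prefix.
have /= e11 := rep_cat_shift j [:: 1; 1]%N [:: 2; 2]%N.
have eR : [:: 1; 1; 1]%N ++ R = (1%N :: rep j [:: 1; 1; 2; 2]%N) ++ [:: 1; 1]%N by rewrite /= e11.
have eT' : T = (P ++ [:: 1; 1; 1]%N ++ R) ++ r ++ [:: 2; 2; 2]%N ++ S by rewrite eT -?catA /= -?catA.
have := all12_suffix eT'; rewrite all_cat => /andP[r12 _] {eT'}.
case: r eT r_nil no_prefix r12 => [|a r] // eT _ no_prefix.
case/andP => /orP[]/eqP ea r12; subst a.
  exists r; first by rewrite size_cat /= addnS ltnS leq_addl.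
  apply/infixP; exists (P ++ 1%N :: rep j [:: 1; 1; 2; 2]%N), S.
  by rewrite eT (catA [:: 1; 1; 1]%N) eR -!catA /= -!catA.
case: r eT no_prefix r12 => [|b r] eT no_prefix.
  move=> _; exists R; first by rewrite size_cat /= addnS ltnS leq_addr.
  by apply/infixP; exists P, (2%N :: S); rewrite eT -?catA /= -?catA.
case/andP => /orP[]/eqP eb r12; subst b.
  case/negP: no_infix121; apply/infixP.
  exists (P ++ 1%N :: rep j [:: 1; 1; 2; 2]%N ++ [:: 1%N]), (r ++ [:: 2; 2; 2]%N ++ S).
  by rewrite eT (catA [:: 1; 1; 1]%N) eR -!catA /= -!catA.
case: r eT no_prefix r12 => [|c r] eT no_prefix.
  move=> _; exists R; first by rewrite size_cat /= addnS ltnS leq_addr.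
  by apply/infixP; exists P, [:: 2, 2 & S]%N; rewrite eT -?catA /= -?catA.
case/andP => /orP[]/eqP ec r12; subst c; last first.
  exists R; first by rewrite size_cat /= addnS ltnS leq_addr.
  by apply/infixP; exists P, (r ++ [:: 2; 2; 2]%N ++ S); rewrite eT -?catA /= -?catA.
case: r eT no_prefix r12 => [|d r] eT no_prefix.
  move=> _; case/negP: no_infix2212; apply/infixP.
  by exists (P ++ [:: 1; 1; 1]%N ++ R), [:: 2, 2 & S]%N; rewrite eT -?catA /= -?catA.
case/andP => /orP[]/eqP ed _; subst d.
  by case/negP: no_prefix; apply: prefix_prefix.
case/negP: no_infix2212; apply/infixP.
by exists (P ++ [:: 1; 1; 1]%N ++ R), (r ++ [:: 2; 2; 2]%N ++ S); rewrite eT -?catA /= -?catA.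
Qed.

Lemma gap_periodic_or_shorter j r P S :
  T = P ++ [:: 1; 1; 1]%N ++ rep j [:: 2; 2; 1; 1]%N ++ r ++ [:: 2; 2; 2]%N ++ S ->
  (exists k, rep j [:: 2; 2; 1; 1]%N ++ r = rep k [:: 2; 2; 1; 1]%N) \/
  exists2 w, (size w < size (rep j [:: 2; 2; 1; 1]%N ++ r))%N &
             infix ([:: 1; 1; 1]%N ++ w ++ [:: 2; 2; 2]%N) T.
Proof.
have [n] := ubnP (size r); elim: n => // n IH in j r *; rewrite ltnS => le_rn eT.
have [-> | r_nil] := eqVneq r [::]; first by left; exists j; rewrite cats0.
have [/prefixP[r' er] | no_prefix] := boolP (prefix [:: 2; 2; 1; 1]%N r); last first.
  by right; apply: gap_step eT r_nil no_prefix.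
have eR : rep j [:: 2; 2; 1; 1]%N ++ r = rep j.+1 [:: 2; 2; 1; 1]%N ++ r'.
  by rewrite er rep_rcons catA.
have eT' : T = P ++ [:: 1; 1; 1]%N ++ rep j.+1 [:: 2; 2; 1; 1]%N ++ r' ++ [:: 2; 2; 2]%N ++ S.
  by rewrite eT (catA (rep j _) r) eR -catA.
have lt_r'n : (size r' < n)%N by move: le_rn; rewrite er size_cat /=; lia.
by rewrite eR; apply: IH lt_r'n eT'.
Qed.

End Admissible.

Lemma admissible_no_gap T w :
  admissible T -> ~~ infix ([:: 1; 1; 1]%N ++ w ++ [:: 2; 2; 2]%N) T.
Proof.
have [n] := ubnP (size w); elim: n => // n IH in T w *; rewrite ltnS => le_wn T_adm.
apply/infixP => -[P [S eT]].
have eT0 : T = P ++ [:: 1; 1; 1]%N ++ rep 0 [:: 2; 2; 1; 1]%N ++ w ++ [:: 2; 2; 2]%N ++ S.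
  by rewrite eT -?catA /= -?catA.
case: (gap_periodic_or_shorter T_adm eT0) => [[k ek] | [w' lt_w' gap']]; last first.
  by case/negP: (IH T w' (leq_trans lt_w' le_wn) T_adm).
rewrite /= in ek; rewrite ek in eT0 le_wn.
have [j lt_jk] := periodic_gap_flip T_adm eT0.
have lt_jn : (size (rep j [:: 2; 2; 1; 1]%N) < n)%N.
  by rewrite !size_rep /= in le_wn *; lia.
rewrite -infix_rev !rev_cat rev_rep.
exact: (negP (IH _ _ lt_jn (admissible_rev T_adm))).
Qed.

Lemma infix_disjoint_cat (A : eqType) (s t u : seq A) :
  infix s u -> infix t u -> ~~ has (mem s) t -> ~~ has (mem t) s ->
  exists w, infix (s ++ w ++ t) u || infix (t ++ w ++ s) u.
Proof.
move=> /infixP[P1 [S1 e1]] /infixP[P2 [S2 e2]].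
wlog le12 : s t P1 S1 P2 S2 e1 e2 / (size P1 <= size P2)%N.
  move=> H st ts; have [le12|/ltnW le21] := leqP (size P1) (size P2).
    exact: H e1 e2 le12 st ts.
  by have [w hw] := H t s P2 S2 P1 S1 e2 e1 le21 ts st; exists w; rewrite orbC.
move=> st ts; have [le | lt] := leqP (size P1 + size s) (size P2).
  exists (drop (size P1 + size s) P2); apply/orP; left; apply/infixP; exists P1, S2.
  have take_P2 : take (size P1 + size s) P2 = P1 ++ s.
    by rewrite -(takel_cat (t ++ S2) le) -e2 e1 catA take_size_cat ?size_cat.
  by rewrite e2 -{1}(cat_take_drop (size P1 + size s) P2) take_P2 -!catA.
case: t st e2 {ts} => [_ _ | x t st e2].
  by exists [::]; rewrite orbC /= e1 infix_infix.
have : nth x u (size P2) \in s.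
  rewrite e1 nth_cat ltnNge le12 /= nth_cat -subSn // leq_subLR lt.
  by rewrite mem_nth // -subSn // leq_subLR.
by rewrite e2 nth_cat ltnn subnn /= => xs; rewrite /= xs in st.
Qed.

Lemma admissible_not_111_222 T :
  admissible T -> infix [:: 1; 1; 1]%N T -> infix [:: 2; 2; 2]%N T -> False.
Proof.
move=> T_adm inf111 inf222.
have [w /orP[gap | gap]] := infix_disjoint_cat inf111 inf222 isT isT.
  by move: gap; apply/negP; apply: admissible_no_gap.
move: gap; rewrite -infix_rev !rev_cat -catA; apply/negP.
exact: admissible_no_gap (admissible_rev T_adm).
Qed.

Lemma infix_nseq (A : eqType) m n (x : A) : (m <= n)%N -> infix (nseq m x) (nseq n x).
Proof. by move=> le_mn; rewrite -(subnKC le_mn) nseqD prefix_infix. Qed.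

Lemma infix_blocks e1 e2 i : size e1 = size e2 -> (i < size e1)%N ->
  infix (nseq (nth 0%N e1 i) 1%N ++ nseq (nth 0%N e2 i) 2%N) (blocks e1 e2).
Proof.
move=> eq_size lt_i; have lt_iz : (i < size (zip e1 e2))%N by rewrite size_zip -eq_size minnn.
rewrite /blocks -(cat_take_drop i (zip e1 e2)) (drop_nth (0%N, 0%N) lt_iz) map_cat flatten_cat.
by rewrite /= nth_zip //; apply: infix_infix.
Qed.

Lemma foldr_max_ge (s : seq rat) x : x \in s -> x <= foldr Num.max 0 s.
Proof.
elim: s => [//|y s IH]; rewrite inE => /orP[/eqP-> | /IH x_le] /=; rewrite le_max ?lexx //.
by rewrite x_le orbT.
Qed.

Lemma Zterm_lt3 T : 1/3 < Zc T -> forall i, (i < size T)%N -> Zterm T i < 3.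
Proof.
rewrite /Zc; set M := foldr _ _ _ => lt_M i lt_i.
have M_gt0 : 0 < M by rewrite -invr_gt0 (lt_trans _ lt_M).
have M_lt3 : M < 3 by rewrite -ltf_pV2 ?posrE // -div1r.
by apply: le_lt_trans M_lt3; apply/foldr_max_ge/map_f; rewrite mem_iota.
Qed.

Theorem lemma3p6 (T : seq nat) (n : nat) (e1 e2 : seq nat) :
  all (fun a => (a == 1%N) || (a == 2%N)) T ->
  ~~ all (fun a => a == 1%N) T ->
  ~~ all (fun a => a == 2%N) T ->
  ~~ odd (init2 T) -> ~~ odd (final2 T) ->
  Zc T > 1 / 3 ->
  size e1 = n -> size e2 = n ->
  (forall i, (0 < i < n)%N -> (0 < nth 0%N e1 i)%N) ->
  (forall i, (i < n.-1)%N -> (0 < nth 0%N e2 i)%N) ->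
  T = blocks e1 e2 ->
  (forall i, (i < n)%N -> (nth 0%N e1 i <= 2)%N) \/
  (forall i, (i < n)%N -> (nth 0%N e2 i <= 2)%N).
Proof.
move=> T12 _ _ even_init even_final Z_gt size_e1 size_e2 _ _ eT.
have T_adm : admissible T by split => //; apply: Zterm_lt3.
have [small1|] := boolP (all (fun i => nth 0%N e1 i <= 2)%N (iota 0 n)).
  by left=> i lt_in; apply: (allP small1); rewrite mem_iota.
case/allPn => i; rewrite mem_iota -ltnNge => /= lt_in big1.
right=> j lt_jn; rewrite leqNgt; apply/negP => big2.
have eq_size : size e1 = size e2 by rewrite size_e1 size_e2.
have inf111 : infix [:: 1; 1; 1]%N T.
  have lt_i : (i < size e1)%N by rewrite size_e1.
  rewrite eT; apply: infix_trans (infix_blocks eq_size lt_i).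
  by apply: infix_catr; exact: (infix_nseq 1%N big1).
have inf222 : infix [:: 2; 2; 2]%N T.
  have lt_j : (j < size e1)%N by rewrite size_e1.
  rewrite eT; apply: infix_trans (infix_blocks eq_size lt_j).
  by apply: infix_catl; exact: (infix_nseq 2%N big2).
exact: admissible_not_111_222 T_adm inf111 inf222.
Qed.
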